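(* Fix a trial $t$ with current parameters $\mathbf{w}^t\in\mathbb{R}^d$ and thresholds $\theta_1^t\le\theta_2^t\le\dots\le\theta_{K-1}^t$, an instance $\mathbf{x}^t\in\mathbb{R}^d$ and an interval label $1\le y_l^t\le y_r^t\le K$. Let $l_i^t=\max(0,1+\theta_i^t-\mathbf{w}^t\cdot\mathbf{x}^t)$ for $1\le i\le y_l^t-1$ and $l_i^t=\max(0,1+\mathbf{w}^t\cdot\mathbf{x}^t-\theta_i^t)$ for $y_r^t\le i\le K-1$. Let $S_l^t\subseteq\{1,\dots,y_l^t-1\}$ and $S_r^t\subseteq\{y_r^t,\dots,K-1\}$ be the current left and right support sets, and for an index $j\in\{1,\dots,y_l^t-1\}\setminus S_l^t$ define its candidate Lagrange multiplier $$\lambda_j^t=l_j^t-\frac{\Vert\mathbf{x}^t\Vert^2\left(l_j^t+\sum_{i\in S_l^t}l_i^t-\sum_{i\in S_r^t}l_i^t\right)}{1+\Vert\mathbf{x}^t\Vert^2\left(1+|S_l^t|+|S_r^t|\right)};$$ an index $j\notin S_l^t$ is admitted to $S_l^t$ iff $\lambda_j^t>0$. Assume $S_l^t\neq\emptyset$, and let $k\notin S_l^t$ with $k+1\in S_l^t$, where $k$ is not admitted, i.e. $\lambda_k^t\le 0$. Then every $k'<k$ with $k'\notin S_l^t$ is also not admitted: $\lambda_{k'}^t\le 0$.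
   Context: This concerns an online passive-aggressive algorithm for ranking into $K$ ordered classes with interval labels. A ranking classifier is given by $\mathbf{w}\in\mathbb{R}^d$ and thresholds $\theta_1\le\dots\le\theta_{K-1}$; an example $\mathbf{x}^t$ comes with an interval label $[y_l^t,y_r^t]$ containing its true rank. At each trial, the thresholds to be updated on the left of the interval form the ''left support set'' $S_l^t$ (indices with positive Lagrange multiplier in the update's KKT conditions), built greedily by testing candidate indices via the multiplier formula above with the current $S_l^t,S_r^t$. *)

From mathcomp Require Import all_boot all_order all_algebra.
Set Implicit Arguments. Unset Strict Implicit. Unset Printing Implicit Defensive.
Import Order.TTheory GRing.Theory Num.Theory.
Local Open Scope ring_scope.

Definition dotp (R : realFieldType) (d : nat) (w x : 'rV[R]_d) : R :=
  \sum_(i < d) w 0 i * x 0 i.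
Definition sqnorm (R : realFieldType) (d : nat) (x : 'rV[R]_d) : R :=
  \sum_(i < d) x 0 i ^+ 2.

(* Losses: thresholds indexed by natural numbers 1..K-1. *)
Definition loss_left (R : realFieldType) (d : nat) (theta : nat -> R)
  (w x : 'rV[R]_d) (i : nat) : R :=
  Num.max 0 (1 + theta i - dotp w x).
Definition loss_right (R : realFieldType) (d : nat) (theta : nat -> R)
  (w x : 'rV[R]_d) (i : nat) : R :=
  Num.max 0 (1 + dotp w x - theta i).

(* Candidate Lagrange multiplier of a left index j, given current support
   sets Sl, Sr (subsets of {0..K-1}, used on indices 1..K-1). *)
Definition lambda_left (R : realFieldType) (d K : nat) (theta : nat -> R)
  (w x : 'rV[R]_d) (Sl Sr : {set 'I_K}) (j : nat) : R :=
  loss_left theta w x j -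
  sqnorm x * (loss_left theta w x j
              + \sum_(i in Sl) loss_left theta w x (val i)
              - \sum_(i in Sr) loss_right theta w x (val i))
  / (1 + sqnorm x * (1 + #|Sl|%:R + #|Sr|%:R)).

From mathcomp Require Import all_boot all_order all_algebra.
From mathcomp Require Import ring.
Import Order.TTheory GRing.Theory Num.Theory.
Local Open Scope ring_scope.

(* With c := |x|^2 / (1 + |x|^2 (1 + |S_l| + |S_r|)) <= 1, the candidate
   multiplier is lambda_j = l_j - c (l_j + m) for an m not depending on j, a
   nondecreasing function of l_j; and l_j is nondecreasing in j because the
   thresholds are.  Hence lambda_k' <= lambda_k <= 0 for k' < k. *)

Section LeftMultiplier.

Variables (R : realFieldType) (d : nat) (theta : nat -> R) (w x : 'rV[R]_d).

Lemma sqnorm_ge0 : 0 <= sqnorm x.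
Proof. by apply: sumr_ge0 => i _; exact: sqr_ge0. Qed.

Lemma loss_left_homo (i j : nat) :
  theta i <= theta j -> loss_left theta w x i <= loss_left theta w x j.
Proof.
move=> le_ij; rewrite /loss_left ge_max le_max lexx le_max /=.
by rewrite lerD2r lerD2l le_ij orbT.
Qed.

Lemma sub_scale_homo (c m : R) :
  c <= 1 -> {homo (fun l => l - c * (l + m)) : a b / a <= b}.
Proof.
move=> c_le1 a b le_ab; rewrite -subr_ge0.
have -> : b - c * (b + m) - (a - c * (a + m)) = (b - a) * (1 - c) by ring.
by rewrite mulr_ge0 // subr_ge0.
Qed.

Lemma lambda_left_homo (K : nat) (Sl Sr : {set 'I_K}) (i j : nat) :
  theta i <= theta j ->
  lambda_left theta w x Sl Sr i <= lambda_left theta w x Sl Sr j.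
Proof.
move=> /loss_left_homo le_loss; rewrite /lambda_left.
set s := sqnorm x; set D := 1 + _.
have s_ge0 : 0 <= s := sqnorm_ge0.
have n_ge0 : 0 <= 1 + #|Sl|%:R + #|Sr|%:R :> R by rewrite !addr_ge0 ?ler0n.
have D_gt0 : 0 < D by rewrite /D ltr_wpDr // mulr_ge0.
have c_le1 : s / D <= 1.
  rewrite ler_pdivrMr // mul1r /D -subr_ge0.
  have -> : 1 + s * (1 + #|Sl|%:R + #|Sr|%:R) - s
            = 1 + s * (#|Sl|%:R + #|Sr|%:R) by ring.
  by rewrite addr_ge0 // mulr_ge0 // addr_ge0 ?ler0n.
rewrite -!(mulrAC s D^-1) -!addrA.
exact: sub_scale_homo _ _ c_le1 _ _ le_loss.
Qed.

End LeftMultiplier.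

Theorem lemma1 (R : realFieldType) (d K : nat) (w x : 'rV[R]_d)
  (theta : nat -> R) (yl yr : nat) (Sl Sr : {set 'I_K}) (k : 'I_K) :
  (forall i j : nat, (1 <= i)%N -> (i <= j)%N -> (j < K)%N -> theta i <= theta j) ->
  (1 <= yl)%N -> (yl <= yr)%N -> (yr <= K)%N ->
  (forall i : 'I_K, i \in Sl -> (1 <= val i)%N && (val i < yl)%N) ->
  (forall i : 'I_K, i \in Sr -> (yr <= val i)%N) ->
  Sl != set0 ->
  (1 <= val k)%N -> k \notin Sl ->
  (exists2 k1 : 'I_K, k1 \in Sl & val k1 = (val k).+1) ->
  lambda_left theta w x Sl Sr (val k) <= 0 ->
  forall k' : 'I_K, (1 <= val k')%N -> (val k' < val k)%N -> k' \notin Sl ->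
    lambda_left theta w x Sl Sr (val k') <= 0.
Proof.
move=> theta_mono _ _ _ _ _ _ _ _ _ lambda_k_le0 k' k'_ge1 lt_k'k _.
apply: le_trans lambda_k_le0; apply: lambda_left_homo.
exact: theta_mono k'_ge1 (ltnW lt_k'k) (ltn_ord k).
Qed.
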